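(* Let $c,h,\alpha,\beta\in\mathbb{C}$, $l,\gamma\in\mathbb{C}^*$ and $k\in\frac12\mathbb{Z}$. In the $\mathcal{D}$-module $M(c,h,l)\otimes\mathbb{C}[y^{\pm\frac12}]$ described below, let $W^{(k)}=\sum_{i\in\frac12\mathbb{Z}_{\ge0}}U(\mathcal{D})(\mathbf{1}\otimes y^{k+i})$ and $W^{(k)}_n=W^{(k)}\cap(M(c,h,l)\otimes y^n)$ for $n\in\frac12\mathbb{Z}$. Then: (1) $W^{(k)}=\sum_{i\in\frac12\mathbb{Z}_{\ge0}}U(\mathcal{D}^-)(\mathbf{1}\otimes y^{k+i})$; (2) $W^{(k)}\supseteq\bigoplus_{i\in\frac12\mathbb{Z},\, i\geq k}M(c,h,l)\otimes y^i$; (3) $M(c,h,l)\otimes y^{k-\frac12}=W^{(k)}_{k-\frac12}\oplus\mathbb{C}(\mathbf{1}\otimes y^{k-\frac12})$; (4) if $P\in U(\mathcal{D}^-)$ is homogeneous and $P\mathbf{1}\otimes y^{k-\frac12}\in W^{(k)}_{k-\frac12}$, then $x\otimes y^{k-\frac12}\in W^{(k)}_{k-\frac12}$ for every $x\in U(\mathcal{D}^-)P\mathbf{1}$.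
   Context: The mirror-twisted Heisenberg–Virasoro algebra $\mathcal{D}$ is the complex Lie algebra with basis $\{d_m,h_r,\mathbf{c},\mathbf{l}: m\in\mathbb{Z}, r\in\frac12+\mathbb{Z}\}$ and brackets $[d_m,d_n]=(m-n)d_{m+n}+\frac{m^3-m}{12}\delta_{m+n,0}\mathbf{c}$, $[d_m,h_r]=-rh_{m+r}$, $[h_r,h_s]=r\delta_{r+s,0}\mathbf{l}$, with $\mathbf{c},\mathbf{l}$ central. $\mathcal{D}^{\pm}=\mathrm{span}\{d_{\pm n},h_{\pm r}: n\in\mathbb{N}, r\in\frac12+\mathbb{Z}_{\ge0}\}$, $\mathcal{D}^0=\mathrm{span}\{d_0,\mathbf{c},\mathbf{l}\}$. Homogeneous elements of $U(\mathcal{D})$ are those of fixed degree, where $\deg d_m=m$, $\deg h_r=r$ (so $d_{-i}$ has degree $-i$). The Verma module is $M(c,h,l)=U(\mathcal{D})\otimes_{U(\mathcal{D}^0\oplus\mathcal{D}^+)}\mathbb{C}\mathbf{1}$ ($d_0\mathbf{1}=h\mathbf{1}$, $\mathbf{c}\mathbf{1}=c\mathbf{1}$, $\mathbf{l}\mathbf{1}=l\mathbf{1}$, $\mathcal{D}^+\mathbf{1}=0$); it equals $U(\mathcal{D}^-)\mathbf{1}$, free over $U(\mathcal{D}^-)$. The vector space $M(c,h,l)\otimes\mathbb{C}[y^{\pm\frac12}]$ is a $\mathcal{D}$-module via, for homogeneous $P\in U(\mathcal{D}^-)$, $i\in\frac12\mathbb{Z}$, $n\in\mathbb{Z}$, $r\in\frac12+\mathbb{Z}$: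 $d_n(P\mathbf{1}\otimes y^i)=\big(d_nP\mathbf{1}+(\alpha+\beta n+\deg(P)-i)P\mathbf{1}\big)\otimes y^{i+n}$, $h_r(P\mathbf{1}\otimes y^i)=\big(h_rP\mathbf{1}+(\delta_{i-\deg(P)\in\mathbb{Z}}+\gamma\,\delta_{i-\deg(P)\notin\mathbb{Z}})P\mathbf{1}\big)\otimes y^{i+r}$, $\mathbf{c}$ and $\mathbf{l}$ acting as $c$ and $l$; here $\delta_{x\in\mathbb{Z}}$ is $1$ if $x\in\mathbb{Z}$ and $0$ otherwise, $\delta_{x\notin\mathbb{Z}}=1-\delta_{x\in\mathbb{Z}}$. (This module is isomorphic to $M(c,h,l)\otimes A(\alpha,\beta,\gamma)$ via $P\mathbf{1}\otimes v_k\mapsto P\mathbf{1}\otimes y^{k+\deg P}$, where $A(\alpha,\beta,\gamma)$ has basis $v_k$, $k\in\frac12\mathbb{Z}$, with $d_mv_k=(\alpha+\beta m-k)v_{m+k}$, $h_rv_n=v_{n+r}$ ($n\in\mathbb{Z}$), $h_rv_s=\gamma v_{r+s}$ ($s\in\frac12+\mathbb{Z}$), $\mathbf{c}=\mathbf{l}=0$.) *)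

From mathcomp Require Import all_boot all_algebra.
From mathcomp Require Import reals complex.
Import GRing.Theory Num.Theory.

Set Implicit Arguments.
Unset Strict Implicit.
Unset Printing Implicit Defensive.

Local Open Scope ring_scope.

(*  - A basis element of D (other than c, l) is a token (b, m) : bool * int: *)
(*      (false, m)  stands for d_m            (m in Z),                      *)
(*      (true,  s)  stands for h_{s + 1/2}    (s in Z).                      *)
(*  - Elements of (1/2)Z (degrees, exponents of y) are stored doubled:      *)
(*    the integer j stands for j/2.                                          *)

Definition token := (bool * int)%type.

Definition tokdeg (t : token) : int := if t.1 then 2 * t.2 + 1 else 2 * t.2.

(* generator of D^- : d_m with m < 0, or h_{s+1/2} with s + 1/2 < 0 *)
Definition negtok (t : token) : bool := t.2 < 0.

Definition negword (w : seq token) : bool := all negtok w.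

Definition wdeg (w : seq token) : int := \sum_(t <- w) tokdeg t.

Definition oddz (j : int) : bool := odd `|j|%N.

Section Modules.
Variable R : realType.
Local Notation C := (R[i]).
Variable V : lmodType C.
(* action of d_m and of h_{s+1/2} on V *)
Variables (dV hV : int -> {linear V -> V}).

Definition half_odd (s : int) : C := s%:~R + 2%:R^-1.

Definition act_tok (t : token) : V -> V := if t.1 then hV t.2 else dV t.2.

Definition act_word (w : seq token) (v : V) : V := foldr act_tok v w.

(* an element P of U(D), given as a linear combination of words, applied to v *)
Definition evalU (P : seq (C * seq token)) (v : V) : V :=
  \sum_(p <- P) p.1 *: act_word p.2 v.

(* V is a D-module on which c acts as c and l acts as l *)
Definition D_rep (c l : C) : Prop :=
  [/\ (forall (m n : int) (v : V),
         dV m (dV n v) - dV n (dV m v)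
         = (m - n)%:~R *: dV (m + n) v
           + (if m + n == 0 then ((m ^+ 3 - m)%:~R / 12%:R * c) *: v else 0)),
      (forall (m s : int) (v : V),
         dV m (hV s v) - hV s (dV m v) = (- half_odd s) *: hV (m + s) v) &
      (forall (s s' : int) (v : V),
         hV s (hV s' v) - hV s' (hV s v)
         = if s + s' + 1 == 0 then (half_odd s * l) *: v else 0)].

(* ordered (PBW) monomials of U(D^-):
   h_{-r_1} ... h_{-r_p} d_{-n_1} ... d_{-n_q}, indices sorted *)
Definition pbw (w : seq token) : Prop :=
  exists (hs ds : seq int),
    [/\ w = map (fun s => (true, s)) hs ++ map (fun n => (false, n)) ds,
        sorted <=%R hs, sorted <=%R ds,
        all (fun s => s < 0) hs & all (fun n => n < 0) ds].

(* (V, v0) is the Verma module M(c,h,l): a D-module with a highest weight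
   vector v0 of weight (c,h,l), free over U(D^-) on v0, i.e. the ordered
   PBW monomials of U(D^-) applied to v0 form a basis of V. *)
Definition is_Verma (v0 : V) (c h l : C) : Prop :=
  D_rep c l /\
  [/\ dV 0 v0 = h *: v0,
      (forall n : int, 0 < n -> dV n v0 = 0),
      (forall s : int, 0 <= s -> hV s v0 = 0),
      (forall v : V, exists P : seq (C * seq token),
          (forall p, p \in P -> pbw p.2) /\ v = evalU P v0) &
      (forall P : seq (C * seq token),
          uniq (map snd P) -> (forall p, p \in P -> pbw p.2) ->
          evalU P v0 = 0 -> forall p, p \in P -> p.1 = 0)].

(* par is the parity operator P1 |-> (-1)^{2 deg P} P1 on M(c,h,l) (it is
   uniquely determined by these conditions, as V = U(D) v0). *)
Definition parity_op (par : {linear V -> V}) (v0 : V) : Prop :=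
  [/\ par v0 = v0,
      (forall (m : int) (v : V), par (dV m v) = dV m (par v)) &
      (forall (s : int) (v : V), par (hV s v) = - hV s (par v))].

(* t : int -> V represents  sum_j  t j (x) y^{j/2}. *)
Definition T := int -> V.

Definition single (j : int) (v : V) : T := fun j' => if j' == j then v else 0.

Definition sumT (s : seq (int * V)) : T :=
  fun j => \sum_(p <- s | p.1 == j) p.2.

Variables (par : {linear V -> V}) (h alpha beta gamma : C).

(* d_n (P1 (x) y^i) = (d_n P1 + (alpha + beta n + deg P - i) P1) (x) y^{i+n},
   using deg(P) P1 = h P1 - d_0 P1 for homogeneous P. *)
Definition dT (n : int) (t : T) : T :=
  fun j => let j0 := j - 2 * n in let v := t j0 in
    dV n v + (alpha + beta * n%:~R - j0%:~R / 2%:R + h) *: v - dV 0 v.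

(* integral-degree and half-integral-degree components *)
Definition Epart (v : V) : V := 2%:R^-1 *: (v + par v).
Definition Opart (v : V) : V := 2%:R^-1 *: (v - par v).

(* coefficient  delta_{i - deg P in Z} + gamma delta_{i - deg P notin Z},
   for i = j0/2 *)
Definition hcoef (j0 : int) (v : V) : V :=
  if oddz j0 then Opart v + gamma *: Epart v else Epart v + gamma *: Opart v.

(* h_{s+1/2} (P1 (x) y^i) = (h_{s+1/2} P1 + coef P1) (x) y^{i+s+1/2} *)
Definition hT (s : int) (t : T) : T :=
  fun j => let j0 := j - (2 * s + 1) in let v := t j0 in hV s v + hcoef j0 v.

(* action operators of the basis of D (c, l act by scalars) *)
Definition opsD (f : T -> T) : Prop :=
  (exists n : int, f = dT n) \/ (exists s : int, f = hT s).

Definition opsDminus (f : T -> T) : Prop :=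
  (exists n : int, n < 0 /\ f = dT n) \/ (exists s : int, s < 0 /\ f = hT s).

End Modules.

(* U(A) S for a set ops of operators spanning the action of A:
   the smallest subspace containing S and stable under every operator in ops *)
Inductive gen_sub (K : fieldType) (V : lmodType K)
    (ops : ((int -> V) -> (int -> V)) -> Prop) (S : (int -> V) -> Prop)
    : (int -> V) -> Prop :=
  | gs_gen t : S t -> gen_sub ops S t
  | gs_zero : gen_sub ops S (fun _ => 0)
  | gs_add t u : gen_sub ops S t -> gen_sub ops S u ->
                 gen_sub ops S (fun j => t j + u j)
  | gs_scale (a : K) t : gen_sub ops S t -> gen_sub ops S (fun j => a *: t j)
  | gs_op f t : ops f -> gen_sub ops S t -> gen_sub ops S (f t).

(* the generators  1 (x) y^{k+i},  i in (1/2)Z_{>=0}  (k = kk/2) *)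
Definition gensW (K : fieldType) (V : lmodType K) (v0 : V) (kk : int)
    (t : int -> V) : Prop :=
  exists i : int, 0 <= i /\ t = (fun j' => if j' == kk + i then v0 else 0).

(* A generator t of D acts on P1 (x) y^i, P homogeneous, as
   (t P + kappa P) 1 (x) y^(i + deg t) for an explicit scalar kappa.  For t
   negative this says that (t x) (x) y^i is congruent to -kappa x (x) y^i modulo
   the image of x (x) y^(i - deg t) under t, which lies in W once
   x (x) y^(i - deg t) does.  Starting from the generators 1 (x) y^(k+i),
   induction on words of D^- gives (2); in degree k - 1/2 it shows that modulo
   W every word of D^- acts on a homogeneous vector as a scalar, which gives
   the sum in (3) and (4).  The operators of the module satisfy the relations
   of D, so the U(D^-)-span of the generators is stable under the nonnegative
   generators, which send generators into the degrees >= k covered by (2):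
   this is (1).  The sum in (3) is direct because the recursion
   phi(t w) = -kappa phi(w) on words of D^- respects the commutation relations;
   straightening words into PBW monomials, phi descends to a linear form Phi on
   M(c,h,l) that vanishes on W_(k-1/2) and takes the value 1 on 1. *)

From Pilot Require Import Defs.
From mathcomp Require Import all_boot all_order all_algebra.
From mathcomp Require Import reals complex.
From mathcomp Require Import ring zify.
From mathcomp Require boolp.
Import Order.TTheory GRing.Theory Num.Theory.
Set Implicit Arguments.
Unset Strict Implicit.
Unset Printing Implicit Defensive.
Local Open Scope ring_scope.

Lemma oddzE (x : int) : oddz x = ((x %% 2)%Z == 1).
Proof.
have oddE m : odd m = ((m %% 2)%N == 1%N) by rewrite modn2; case: odd.
by rewrite /oddz oddE; case: x => n /=; do 2 case: eqP; lia.
Qed.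

Lemma oddzD (x y : int) : oddz (x + y) = oddz x (+) oddz y.
Proof. by rewrite !oddzE; do 3 case: eqP => /=; lia. Qed.

Lemma oddzB (x y : int) : oddz (x - y) = oddz x (+) oddz y.
Proof. by rewrite !oddzE; do 3 case: eqP => /=; lia. Qed.

Lemma oddz_double (x : int) : oddz (2 * x) = false.
Proof. by rewrite oddzE; apply/eqP; lia. Qed.

Lemma big_undup_partition (I K : eqType) (M : nmodType) (key : I -> K)
    (F : I -> M) (s : seq I) :
  \sum_(i <- s) F i = \sum_(k <- undup (map key s)) \sum_(i <- s | key i == k) F i.
Proof.
rewrite (exchange_big_dep predT) //=; apply: eq_big_seq => i si.
have ki : key i \in undup (map key s) by rewrite mem_undup map_f.
rewrite (big_rem (key i) ki) /= eqxx big1_seq ?addr0 // => k /andP [/eqP <-].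
by rewrite mem_rem_uniqF ?undup_uniq.
Qed.

Lemma wdeg_nil : wdeg [::] = 0.
Proof. by rewrite /wdeg big_nil. Qed.

Lemma wdeg_cons t w : wdeg (t :: w) = tokdeg t + wdeg w.
Proof. by rewrite /wdeg big_cons. Qed.

Lemma negtok_deg t : negtok t -> tokdeg t < 0.
Proof. by case: t => [[] n]; rewrite /negtok /tokdeg /=; lia. Qed.

Lemma nonnegtok_deg t : ~~ negtok t -> 0 <= tokdeg t.
Proof. by case: t => [[] n]; rewrite /negtok /tokdeg /=; lia. Qed.

(* The order of [pbw] monomials: h's before d's, indices nondecreasing. *)
Definition tok_le (a b : token) : bool := if a.1 == b.1 then a.2 <= b.2 else a.1.

Lemma tok_le_trans : transitive tok_le.
Proof.
move=> [b2 y] [b1 x] [b3 z]; rewrite /tok_le /=.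
by case: b1; case: b2; case: b3 => //=; apply: le_trans.
Qed.

Lemma tok_le_total a b : tok_le a b || tok_le b a.
Proof.
case: a b => [b1 x] [b2 y]; rewrite /tok_le /=.
by case: b1; case: b2 => //=; apply: le_total.
Qed.

Lemma pbw_nil : pbw [::].
Proof. by exists [::], [::]. Qed.

Lemma pbw_cons g w : negtok g -> pbw w -> all (tok_le g) w -> pbw (g :: w).
Proof.
case: g => [[] x]; rewrite /negtok /= => xneg [hs [ds [-> shs sds nhs nds]]].
  rewrite all_cat !all_map => /andP [ghs _]; exists (x :: hs), ds.
  split => //=; last by rewrite xneg nhs.
  by rewrite path_min_sorted //; apply: sub_all ghs => s.
rewrite all_cat !all_map => /andP [].
case: hs {shs nhs} => [|s hs] //= _ gds.
exists [::], (x :: ds); split => //=; last by rewrite xneg nds.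
by rewrite path_min_sorted //; apply: sub_all gds => n.
Qed.

Lemma pbw_consP g w : pbw (g :: w) -> [/\ negtok g, pbw w & all (tok_le g) w].
Proof.
case=> [[|s hs] [ds [E shs sds nhs nds]]].
  case: ds E sds nds => [|n ds] //= [-> ->] sds /andP [nneg nds]; split => //.
    by exists [::], ds; split => //; apply: path_sorted sds.
  rewrite all_map; apply: sub_all (order_path_min le_trans sds) => m.
  by rewrite /tok_le.
move: E shs nhs => /= [-> ->] shs /andP [sneg nhs]; split => //.
  by exists hs, ds; split => //; apply: path_sorted shs.
rewrite all_cat !all_map; apply/andP; split; last by apply/allP.
by apply: sub_all (order_path_min le_trans shs) => m; rewrite /tok_le.
Qed.

Lemma pbw_negword w : pbw w -> negword w.
Proof.
by case=> hs [ds] [-> _ _ nhs nds]; rewrite /negword all_cat !all_map nhs nds.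
Qed.

Lemma bracket_rearrange (K : comPzRingType) (M : lmodType K) (P Q X Y Z W : M)
    (a1 a2 b2 b4 b5 c z : K) :
  a1 * b2 = a2 * b4 + c * b5 -> P = Q + c *: W + z *: Z ->
  P + a2 *: X + a1 *: (Y + b2 *: Z) =
  Q + a1 *: Y + a2 *: (X + b4 *: Z) + c *: (W + b5 *: Z) + z *: Z.
Proof.
move=> E ->; rewrite !scalerDr !scalerA E scalerDl !addrA.
by rewrite [LHS](ACl (1*5*4*6*2*7*3)).
Qed.

Section Verma.
Variable R : realType.
Local Notation C := R[i].
Variable V : lmodType C.
Variables (dV hV : int -> {linear V -> V}) (par : {linear V -> V}) (v0 : V).
Variables (c h l : C).
Context {alpha beta gamma : C} {kk : int}.
Hypothesis verma : is_Verma dV hV v0 c h l.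
Hypothesis parity : parity_op dV hV par v0.

Local Notation act_tok := (act_tok dV hV).
Local Notation act_word := (act_word dV hV).
Local Notation evalU := (evalU dV hV).

Lemma act_tokD t : {morph act_tok t : x y / x + y}.
Proof. by case: t => [[] n] x y; rewrite /Defs.act_tok /= linearD. Qed.

Lemma act_tokZ t a x : act_tok t (a *: x) = a *: act_tok t x.
Proof. by case: t => [[] n]; rewrite /Defs.act_tok /= linearZ. Qed.

Lemma act_tok0 t : act_tok t 0 = 0.
Proof. by case: t => [[] n]; rewrite /Defs.act_tok /= linear0. Qed.

Lemma evalU_nil x : evalU [::] x = 0.
Proof. by rewrite /Defs.evalU big_nil. Qed.

Lemma evalU_cons p P x : evalU (p :: P) x = p.1 *: act_word p.2 x + evalU P x.
Proof. by rewrite /Defs.evalU big_cons. Qed.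

Lemma evalU_cat P Q x : evalU (P ++ Q) x = evalU P x + evalU Q x.
Proof. by rewrite /Defs.evalU big_cat. Qed.

Lemma evalU_scale a P x : evalU [seq (a * p.1, p.2) | p <- P] x = a *: evalU P x.
Proof.
by rewrite /Defs.evalU big_map scaler_sumr; apply: eq_bigr => p _; rewrite scalerA.
Qed.

Lemma evalU_closed (S : V -> Prop) P x :
  S 0 -> (forall u v, S u -> S v -> S (u + v)) -> (forall a u, S u -> S (a *: u)) ->
  (forall p, p \in P -> S (act_word p.2 x)) -> S (evalU P x).
Proof.
move=> S0 SD SZ SP; elim: P SP => [|p P IH] SP; first by rewrite evalU_nil.
rewrite evalU_cons; apply: SD; first by apply/SZ/SP/mem_head.
by apply: IH => q Pq; apply: SP; rewrite inE Pq orbT.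
Qed.

Lemma pbw_span v : exists P, (forall p, p \in P -> pbw p.2) /\ v = evalU P v0.
Proof. by case: verma => _ [_ _ _ span _]. Qed.

(* [g, g1] = lie_coef g g1 * lie_tok g g1 + lie_central g g1; for two h's the
   coefficient is 0 and [lie_tok] is chosen only to keep degrees additive. *)
Definition lie_tok (g g1 : token) : token :=
  (g.1 (+) g1.1, g.2 + g1.2 + (g.1 && g1.1 : nat)%:Z).

Definition lie_coef (g g1 : token) : C :=
  match g.1, g1.1 with
  | false, false => (g.2 - g1.2)%:~R
  | false, true => - half_odd R g1.2
  | true, false => half_odd R g.2
  | true, true => 0
  end.

Definition lie_central (g g1 : token) : C :=
  match g.1, g1.1 with
  | false, false => if g.2 + g1.2 == 0 then (g.2 ^+ 3 - g.2)%:~R / 12%:R * c else 0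
  | true, true => if g.2 + g1.2 + 1 == 0 then half_odd R g.2 * l else 0
  | _, _ => 0
  end.

Lemma act_tok_comm g g1 x :
  act_tok g (act_tok g1 x) =
  act_tok g1 (act_tok g x) + lie_coef g g1 *: act_tok (lie_tok g g1) x
  + lie_central g g1 *: x.
Proof.
have [[dd dh hh] _] := verma.
case: g => [[] m]; case: g1 => [[] n];
  rewrite /lie_coef /lie_central /lie_tok /Defs.act_tok /= ?addr0.
- rewrite scale0r addr0 -[LHS](subrK (hV n (hV m x))) hh addrC.
  by case: ifP; rewrite ?scale0r.
- rewrite scale0r addr0 (addrC m n) -[half_odd _ _ *: _]opprK -scaleNr -dh.
  by rewrite opprB addrC subrK.
- by rewrite scale0r addr0 -[LHS](subrK (hV n (dV m x))) dh addrC.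
- rewrite -addrA -[LHS](subrK (dV n (dV m x))) dd addrC.
  by case: ifP; rewrite ?scale0r.
Qed.

Lemma tokdeg_lie g g1 : tokdeg (lie_tok g g1) = tokdeg g + tokdeg g1.
Proof. by case: g => [[] m]; case: g1 => [[] n]; rewrite /tokdeg /lie_tok /=; lia. Qed.

Lemma negtok_lie g g1 : negtok g -> negtok g1 -> negtok (lie_tok g g1).
Proof. by case: g => [[] m]; case: g1 => [[] n]; rewrite /negtok /lie_tok /=; lia. Qed.

Lemma lie_central_eq0 g g1 : tokdeg g + tokdeg g1 != 0 -> lie_central g g1 = 0.
Proof.
case: g => [[] m]; case: g1 => [[] n]; rewrite /lie_central /tokdeg //=;
  move=> ne; case: eqP => // sum0; exfalso; lia.
Qed.

Lemma d0_act_tok t x :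
  dV 0 (act_tok t x) = act_tok t (dV 0 x) - ((tokdeg t)%:~R / 2%:R) *: act_tok t x.
Proof.
have [[dd dh _] _] := verma.
case: t => [[] n]; rewrite /Defs.act_tok /tokdeg /=.
  rewrite -[LHS](subrK (hV n (dV 0 x))) dh add0r addrC; congr (_ + _).
  by rewrite -scaleNr /half_odd; congr (- _ *: _); rewrite rmorphD rmorphM /=; field.
rewrite -[LHS](subrK (dV n (dV 0 x))) dd !add0r oppr0 !mul0r scale0r.
rewrite if_same addr0 addrC; congr (_ + _).
by rewrite -scaleNr; congr (_ *: _); rewrite rmorphN rmorphM /=; field.
Qed.

Lemma par_act_tok t x : par (act_tok t x) = (-1) ^+ oddz (tokdeg t) *: act_tok t (par x).
Proof.
have [_ pard parh] := parity.
case: t => [[] n]; rewrite /Defs.act_tok /tokdeg /= ?oddzD oddz_double /=.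
  by rewrite parh expr1 scaleN1r.
by rewrite pard expr0 scale1r.
Qed.

(* [homog d x]: x is P 1 for some P of degree d/2, as far as d_0 and the
   parity operator can tell. *)
Definition homog (d : int) (x : V) : Prop :=
  dV 0 x = (h - d%:~R / 2%:R) *: x /\ par x = (-1) ^+ oddz d *: x.

Lemma homog0 d : homog d 0.
Proof. by split; rewrite !linear0. Qed.

Lemma homogD d x y : homog d x -> homog d y -> homog d (x + y).
Proof. by move=> [d0x parx] [d0y pary]; split; rewrite linearD ?d0x ?d0y ?parx ?pary scalerDr. Qed.

Lemma homogZ d a x : homog d x -> homog d (a *: x).
Proof. by move=> [d0x parx]; split; rewrite linearZ /= ?d0x ?parx !scalerA mulrC. Qed.

Lemma homog_v0 : homog 0 v0.
Proof.
have [_ [d0 _ _ _ _]] := verma; have [par0 _ _] := parity.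
by split; [rewrite d0 mulr0z mul0r subr0 | rewrite par0 expr0 scale1r].
Qed.

Lemma homog_act_tok t d x : homog d x -> homog (tokdeg t + d) (act_tok t x).
Proof.
move=> [d0x parx]; split.
  rewrite d0_act_tok d0x act_tokZ -scalerBl; congr (_ *: _).
  by rewrite rmorphD /=; field.
by rewrite par_act_tok parx act_tokZ scalerA -signr_addb oddzD.
Qed.

Lemma homog_act_word w d x : homog d x -> homog (wdeg w + d) (act_word w x).
Proof.
move=> hx; elim: w => [|t w IH] /=; first by rewrite wdeg_nil add0r.
by rewrite wdeg_cons -addrA; apply: homog_act_tok.
Qed.

Lemma homog_word w : homog (wdeg w) (act_word w v0).
Proof. by rewrite -[wdeg w]addr0; apply/homog_act_word/homog_v0. Qed.

Lemma homog_evalU P d : (forall p, p \in P -> wdeg p.2 = d) -> homog d (evalU P v0).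
Proof.
move=> degP; apply: (@evalU_closed (homog d)) => [|x y|a x|p /degP <-].
- exact: homog0.
- exact: homogD.
- exact: homogZ.
- exact: homog_word.
Qed.

Local Notation T := (int -> V).
Local Notation single := (@single R V).

Definition actT (t : token) : T -> T :=
  if t.1 then hT hV par gamma t.2 else dT dV h alpha beta t.2.

(* The scalars of the paper's formulas for t acting on P1 (x) y^(j/2) with
   deg P = d/2: alpha + beta n + deg P - j/2 for d_n, and
   delta_{j/2 - deg P in Z} + gamma delta_{j/2 - deg P notin Z} for h_r. *)
Definition kappa (t : token) (j d : int) : C :=
  if t.1 then (if oddz (j - d) then gamma else 1)
  else alpha + beta * t.2%:~R + (d - j)%:~R / 2%:R.

Lemma kappa_shift t j d e : kappa t (j + e) (d + e) = kappa t j d.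
Proof.
have shift (a b : int) : a + e - (b + e) = a - b by lia.
by rewrite /kappa !shift.
Qed.

Lemma single_at j v : single j v j = v.
Proof. by rewrite /single eqxx. Qed.

Lemma singleD j u v : single j (u + v) = (fun j' => single j u j' + single j v j').
Proof. by apply: boolp.funext => j'; rewrite /single; case: eqP; rewrite ?addr0. Qed.

Lemma singleZ j a u : single j (a *: u) = (fun j' => a *: single j u j').
Proof. by apply: boolp.funext => j'; rewrite /single; case: eqP; rewrite ?scaler0. Qed.

Lemma single0 j : single j 0 = (fun _ => 0 : V).
Proof. by apply: boolp.funext => j'; rewrite /single; case: eqP. Qed.

Lemma EpartD u v : Epart par (u + v) = Epart par u + Epart par v.
Proof. by rewrite /Epart [par _]linearD addrACA scalerDr. Qed.

Lemma OpartD u v : Opart par (u + v) = Opart par u + Opart par v.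
Proof. by rewrite /Opart [par _]linearD opprD addrACA scalerDr. Qed.

Lemma EpartZ a u : Epart par (a *: u) = a *: Epart par u.
Proof. by rewrite /Epart [par _]linearZ -scalerDr !scalerA mulrC. Qed.

Lemma OpartZ a u : Opart par (a *: u) = a *: Opart par u.
Proof. by rewrite /Opart [par _]linearZ -scalerBr !scalerA mulrC. Qed.

Lemma hcoefD j u v : hcoef par gamma j (u + v) = hcoef par gamma j u + hcoef par gamma j v.
Proof. by rewrite /hcoef EpartD OpartD !scalerDr; case: oddz; rewrite addrACA. Qed.

Lemma hcoefZ j a u : hcoef par gamma j (a *: u) = a *: hcoef par gamma j u.
Proof.
rewrite /hcoef EpartZ OpartZ.
by move: (Epart par u) (Opart par u) => E O; case: oddz; rewrite scalerDr !scalerA mulrC.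
Qed.

Lemma hcoef_homog j d x : homog d x ->
  hcoef par gamma j x = (if oddz (j - d) then gamma else 1) *: x.
Proof.
have halfK (y : V) : 2%:R^-1 *: (y + y) = y.
  by rewrite -mulr2n -(scaler_nat 2 y) scalerA mulVf ?scale1r ?pnatr_eq0.
move=> [_ parx]; rewrite /hcoef /Epart /Opart parx oddzB.
by case: (oddz j); case: (oddz d); rewrite ?expr0 ?expr1 ?scale1r ?scaleN1r ?opprK ?subrr
  ?scaler0 ?addr0 ?add0r ?halfK.
Qed.

Lemma actT_single t j d x : homog d x ->
  actT t (single j x) = single (j + tokdeg t) (act_tok t x + kappa t j d *: x).
Proof.
move=> hx; apply: boolp.funext => j'; rewrite /single.
case: t => [[] n]; rewrite /actT /hT /dT /kappa /Defs.act_tok /tokdeg /= subr_eq.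
  case: eqP => [->|_]; first by rewrite addrK (hcoef_homog _ hx).
  by rewrite linear0 (hcoef_homog _ (homog0 0)) scaler0 addr0.
case: eqP => [->|_]; last by rewrite !linear0 ?scaler0 ?addr0 ?subr0.
rewrite addrK hx.1 -addrA -scalerBl; congr (_ + _ *: _).
by rewrite rmorphB /=; field.
Qed.

Lemma actTD t (u v : T) : actT t (fun j => u j + v j) = (fun j => actT t u j + actT t v j).
Proof.
apply: boolp.funext => j; case: t => [[] n]; rewrite /actT /hT /dT /=.
  by rewrite linearD hcoefD addrACA.
rewrite (linearD (dV n)) (linearD (dV 0)) scalerDr opprD.
by rewrite (addrACA (dV n _)) (addrACA (dV n (u _) + _)).
Qed.

Lemma actTZ t a (u : T) : actT t (fun j => a *: u j) = (fun j => a *: actT t u j).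
Proof.
apply: boolp.funext => j; case: t => [[] n]; rewrite /actT /hT /dT /=.
  by rewrite linearZ /= hcoefZ scalerDr.
by rewrite [dV n _]linearZ [dV 0 _]linearZ /= scalerBr scalerDr !scalerA (mulrC _ a).
Qed.

Lemma actT0 t : actT t (fun _ => 0) = (fun _ => 0).
Proof.
apply: boolp.funext => j; case: t => [[] n]; rewrite /actT /hT /dT /= !linear0.
  by rewrite (hcoef_homog _ (homog0 0)) scaler0 addr0.
by rewrite ?scaler0 ?addr0 ?subr0.
Qed.

Lemma actT_local t (u : T) j :
  actT t u j = actT t (single (j - tokdeg t) (u (j - tokdeg t))) j.
Proof. by case: t => [[] n]; rewrite /actT /tokdeg /= /hT /dT single_at. Qed.

Section Generated.
Variable ops : (T -> T) -> Prop.
Hypothesis ops_neg : forall t, negtok t -> ops (actT t).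
Local Notation G := (gen_sub ops (gensW v0 kk)).

Lemma gen_single0 j : G (single j 0).
Proof. by rewrite single0; apply: gs_zero. Qed.

Lemma gen_singleD j u v : G (single j u) -> G (single j v) -> G (single j (u + v)).
Proof. by move=> Gu Gv; rewrite singleD; apply: gs_add. Qed.

Lemma gen_singleZ j a u : G (single j u) -> G (single j (a *: u)).
Proof. by move=> Gu; rewrite singleZ; apply: gs_scale. Qed.

Lemma gen_singleB j u v : G (single j u) -> G (single j v) -> G (single j (u - v)).
Proof. by move=> Gu Gv; rewrite -scaleN1r; apply/gen_singleD/gen_singleZ. Qed.

Lemma gen_single_word w j : negword w -> kk <= j -> G (single j (act_word w v0)).
Proof.
elim: w j => [|t w IH] j /=.
  move=> _ le_kj; apply: gs_gen; exists (j - kk); split; first by rewrite subr_ge0.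
  by rewrite addrC subrK.
move=> /andP [tneg wneg] le_kj.
set y := act_word w v0; set a := kappa t (j - tokdeg t) (wdeg w).
have Gy : G (single (j - tokdeg t) y) by apply: IH => //; have := negtok_deg tneg; lia.
have := gs_op (ops_neg tneg) Gy; rewrite (actT_single _ _ (homog_word w)) subrK => Gty.
have -> : act_tok t y = (act_tok t y + a *: y) - a *: y by rewrite addrK.
by apply: gen_singleB => //; apply: gen_singleZ; apply: IH.
Qed.

Lemma gen_single_high j v : kk <= j -> G (single j v).
Proof.
move=> le_kj; have [P [pbwP ->]] := pbw_span v.
apply: (@evalU_closed (fun u => G (single j u))) => [|u u'|a u|p Pp].
- exact: gen_single0.
- exact: gen_singleD.
- exact: gen_singleZ.
- by apply: gen_single_word => //; apply/pbw_negword/pbwP.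
Qed.

Lemma gen_sumT (s : seq (int * V)) : (forall p, p \in s -> kk <= p.1) -> G (sumT s).
Proof.
elim: s => [|p s IH] les.
  by rewrite (_ : sumT [::] = fun _ => 0); [apply: gs_zero | apply: boolp.funext => j; rewrite /sumT big_nil].
rewrite (_ : sumT (p :: s) = fun j => single p.1 p.2 j + sumT s j).
  apply: gs_add; first by apply/gen_single_high/les/mem_head.
  by apply: IH => q sq; apply: les; rewrite inE sq orbT.
apply: boolp.funext => j; rewrite /sumT big_cons /Defs.single eq_sym.
by case: eqP => _; rewrite ?add0r.
Qed.

(* Each generator t acts like the scalar -kappa up to an image of actT t whose
   argument sits in degree k - 1/2 - deg t >= k, covered by [gen_single_high]. *)
Lemma act_word_mod_gen w d x : negword w -> homog d x ->
  exists a, G (single (kk - 1) (act_word w x - a *: x)).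
Proof.
move=> + hx; elim: w => [_|t w IH /andP [tneg /IH [a Gw]]] /=.
  by exists 1; rewrite scale1r subrr; apply: gen_single0.
set y := act_word w x; set b := kappa t (kk - 1 - tokdeg t) (wdeg w + d).
have Gy : G (single (kk - 1 - tokdeg t) y).
  by apply: gen_single_high; have := negtok_deg tneg; lia.
have := gs_op (ops_neg tneg) Gy; rewrite (actT_single _ _ (homog_act_word w hx)) subrK.
move=> Gty; exists (- b * a).
have -> : act_tok t y - (- b * a) *: x = (act_tok t y + b *: y) - b *: (y - a *: x).
  by rewrite scalerBr opprB addrACA subrr addr0 scalerA mulNr scaleNr opprK.
by apply: gen_singleB => //; apply: gen_singleZ.
Qed.

Lemma evalU_mod_gen P d x : (forall p, p \in P -> negword p.2) -> homog d x ->
  exists a, G (single (kk - 1) (evalU P x - a *: x)).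
Proof.
move=> + hx; elim: P => [_|p P IH negP].
  by exists 0; rewrite evalU_nil scale0r subrr; apply: gen_single0.
have [a Gp] := act_word_mod_gen (negP p (mem_head _ _)) hx.
have [b GP] : exists b, G (single (kk - 1) (evalU P x - b *: x)).
  by apply: IH => q Pq; apply: negP; rewrite inE Pq orbT.
exists (p.1 * a + b); rewrite evalU_cons.
have -> : p.1 *: act_word p.2 x + evalU P x - (p.1 * a + b) *: x =
    p.1 *: (act_word p.2 x - a *: x) + (evalU P x - b *: x).
  by rewrite scalerBr scalerA scalerDl opprD addrACA.
by apply: gen_singleD GP; apply: gen_singleZ.
Qed.

End Generated.

(* [phi w] is the scalar of [act_word_mod_gen] for w acting on x = v0. *)
Fixpoint phi (w : seq token) : C :=
  if w is t :: u then - kappa t (kk - 1 - tokdeg t) (wdeg u) * phi u else 1.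

Lemma kappa_comm g g1 j d :
  kappa g1 j d * kappa g (j + tokdeg g1) d =
  kappa g j d * kappa g1 (j + tokdeg g) d + lie_coef g g1 * kappa (lie_tok g g1) j d.
Proof.
case: g => [[] m]; case: g1 => [[] n];
  rewrite /kappa /lie_coef /lie_tok /tokdeg /half_odd /= ?oddzB ?oddzD ?oddz_double /=;
  rewrite ?(rmorphD, rmorphB, rmorphM, rmorphN) /=;
  by case: (oddz j); case: (oddz d) => /=; field.
Qed.

Lemma phi_comm g g1 u :
  phi (g :: g1 :: u) = phi (g1 :: g :: u) + lie_coef g g1 * phi (lie_tok g g1 :: u).
Proof.
rewrite /= !wdeg_cons; set j := kk - 1 - tokdeg g - tokdeg g1.
have -> : kk - 1 - tokdeg g = j + tokdeg g1 by rewrite subrK.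
have -> : kk - 1 - tokdeg g1 = j + tokdeg g by rewrite /j; lia.
have -> : kk - 1 - tokdeg (lie_tok g g1) = j by rewrite tokdeg_lie /j opprD addrA.
rewrite !(addrC (tokdeg _) (wdeg u)) !kappa_shift.
by rewrite !mulNr !mulrN !opprK !mulrA (kappa_comm g g1); ring.
Qed.

Lemma act_word_comm g g1 u x : negtok g -> negtok g1 ->
  act_word (g :: g1 :: u) x =
  act_word (g1 :: g :: u) x + lie_coef g g1 *: act_word (lie_tok g g1 :: u) x.
Proof.
move=> /negtok_deg gneg /negtok_deg g1neg.
by rewrite /= act_tok_comm lie_central_eq0 ?scale0r ?addr0 //; lia.
Qed.

(* P writes w v0 in the PBW basis, compatibly with phi; keeping every term
   shorter than w or a rearrangement of w makes the straightening terminate. *)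
Definition pbw_term_of (w : seq token) (p : C * seq token) : Prop :=
  [/\ pbw p.2, wdeg p.2 = wdeg w & (size p.2 < size w)%N \/ perm_eq p.2 w].

Definition pbw_expansion (w : seq token) (P : seq (C * seq token)) : Prop :=
  [/\ forall p, p \in P -> pbw_term_of w p, evalU P v0 = act_word w v0 &
      \sum_(p <- P) p.1 * phi p.2 = phi w].

Lemma sum_phi_scale a (P : seq (C * seq token)) :
  \sum_(p <- [seq (a * p.1, p.2) | p <- P]) p.1 * phi p.2 = a * \sum_(p <- P) p.1 * phi p.2.
Proof. by rewrite big_map mulr_sumr; apply: eq_bigr => p _ /=; rewrite mulrA. Qed.

Lemma wdeg_perm w w' : perm_eq w w' -> wdeg w = wdeg w'.
Proof. exact: perm_big. Qed.

Lemma pbw_expansion_pbw w : pbw w -> pbw_expansion w [:: (1, w)].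
Proof.
move=> pbww; split => [p|/=|/=]; last by rewrite big_seq1 mul1r.
  by rewrite inE => /eqP -> /=; split => //; right.
by rewrite evalU_cons evalU_nil addr0 scale1r.
Qed.

Lemma pbw_expansion_comb w w1 w2 a P1 P2 :
  pbw_expansion w1 P1 -> pbw_expansion w2 P2 ->
  act_word w v0 = act_word w1 v0 + a *: act_word w2 v0 -> phi w = phi w1 + a * phi w2 ->
  perm_eq w1 w -> wdeg w2 = wdeg w -> (size w2 < size w)%N ->
  pbw_expansion w (P1 ++ [seq (a * p.1, p.2) | p <- P2]).
Proof.
move=> [P1w1 evP1 phP1] [P2w2 evP2 phP2] evw phw pe degw2 szw2.
split; first move=> p; rewrite ?mem_cat.
- case/orP => [/P1w1 [pbwp degp szp]|/mapP [q /P2w2 [pbwq degq szq] ->]].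
    split => //; first by rewrite degp (wdeg_perm pe).
    case: szp => [lt|pe']; [by left; rewrite -(perm_size pe) | by right; apply: perm_trans pe' pe].
  split; rewrite //= ?degq //; left.
  by case: szq => [lt|/perm_size ->] //; apply: ltn_trans lt szw2.
- by rewrite evalU_cat evalU_scale evP1 evP2 evw.
- by rewrite big_cat sum_phi_scale phP1 phP2 phw.
Qed.

Lemma pbw_term_of_cons g u q r :
  pbw_term_of u q -> pbw_term_of (g :: q.2) r -> pbw_term_of (g :: u) r.
Proof.
move=> [_ degq szq] [pbwr degr szr]; split => //; first by rewrite degr !wdeg_cons degq.
case: szq => [ltq|peq]; case: szr => [ltr|per].
- by left; rewrite /= ltnS -ltnS (leq_trans ltr) // ltnS ltnW.
- by left; rewrite (perm_size per) /= ltnS.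
- by left; rewrite /= -(perm_size peq).
- by right; apply: perm_trans per _; rewrite perm_cons.
Qed.

Lemma sum_phi_cons g u (Q : seq (C * seq token)) :
  (forall q, q \in Q -> wdeg q.2 = wdeg u) ->
  \sum_(q <- Q) q.1 * phi (g :: q.2) =
  - kappa g (kk - 1 - tokdeg g) (wdeg u) * \sum_(q <- Q) q.1 * phi q.2.
Proof.
rewrite mulr_sumr => degQ; apply: eq_big_seq => q /degQ /= ->.
by rewrite mulrCA.
Qed.

Lemma act_tok_evalU g Q x :
  act_tok g (evalU Q x) = \sum_(q <- Q) q.1 *: act_word (g :: q.2) x.
Proof.
elim: Q => [|q Q IH]; first by rewrite evalU_nil act_tok0 big_nil.
by rewrite evalU_cons act_tokD act_tokZ IH big_cons.
Qed.

Lemma pbw_terms_cons g u (Q : seq (C * seq token)) :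
  (forall q, q \in Q -> pbw_term_of u q) ->
  (forall q, q \in Q -> exists P, pbw_expansion (g :: q.2) P) ->
  exists P, [/\ forall p, p \in P -> pbw_term_of (g :: u) p,
    evalU P v0 = \sum_(q <- Q) q.1 *: act_word (g :: q.2) v0 &
    \sum_(p <- P) p.1 * phi p.2 = \sum_(q <- Q) q.1 * phi (g :: q.2)].
Proof.
elim: Q => [|q Q IH] termQ expQ; first by exists [::]; rewrite evalU_nil !big_nil.
have subQ : {subset Q <= q :: Q} by move=> r Qr; rewrite inE Qr orbT.
have [P [termP evP phP]] := IH (fun r Qr => termQ r (subQ r Qr)) (fun r Qr => expQ r (subQ r Qr)).
have [P' [termP' evP' phP']] := expQ q (mem_head _ _).
exists ([seq (q.1 * p.1, p.2) | p <- P'] ++ P); split.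
- move=> p; rewrite mem_cat => /orP [/mapP [r /termP' termr ->]|/termP //].
  exact: pbw_term_of_cons (termQ q (mem_head _ _)) termr.
- by rewrite evalU_cat evalU_scale evP' evP big_cons.
- by rewrite big_cat sum_phi_scale phP' phP big_cons.
Qed.

Lemma pbw_expansion_cons g u Q : pbw_expansion u Q ->
  (forall q, q \in Q -> exists P, pbw_expansion (g :: q.2) P) ->
  exists P, pbw_expansion (g :: u) P.
Proof.
move=> [termQ evQ phQ] /(pbw_terms_cons termQ) [P [termP evP phP]].
exists P; split => //; first by rewrite evP -act_tok_evalU evQ.
by rewrite phP (@sum_phi_cons g u) ?phQ // => q /termQ [].
Qed.

Section Straightening.
Variable n : nat.
Hypothesis IHn : forall w, negword w -> (size w <= n)%N -> exists P, pbw_expansion w P.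

Lemma pbw_expansion_insert g q : negtok g -> pbw q -> (size q <= n)%N ->
  exists P, pbw_expansion (g :: q) P.
Proof.
case: q => [|g1 q] gneg pbwq szq.
  by exists [:: (1, [:: g])]; apply/pbw_expansion_pbw/pbw_cons => //; apply: pbw_nil.
have [g1neg pbwq' g1q] := pbw_consP pbwq; have negq := pbw_negword pbwq'.
have [le_gg1|lt_g1g] := boolP (tok_le g g1).
  exists [:: (1, g :: g1 :: q)]; apply/pbw_expansion_pbw/pbw_cons => //=.
  by rewrite le_gg1; apply: sub_all g1q => t; apply: tok_le_trans.
have le_g1g : tok_le g1 g by move: (tok_le_total g g1); rewrite (negbTE lt_g1g).
have [P1 expP1] : exists P, pbw_expansion (g1 :: g :: q) P.
  have [P expP] : exists P, pbw_expansion (g :: q) P by apply: IHn; rewrite /= ?gneg.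
  have [termP _ _] := expP.
  apply: (pbw_expansion_cons expP) => r /termP [pbwr _ [ltr|per]].
    by apply: IHn; [apply/andP; split; last apply: pbw_negword | apply: leq_trans ltr szq].
  exists [:: (1, g1 :: r.2)]; apply/pbw_expansion_pbw/pbw_cons => //.
  by rewrite (perm_all _ per) /= le_g1g.
have [P2 expP2] : exists P, pbw_expansion (lie_tok g g1 :: q) P.
  by apply: IHn; rewrite /= ?negtok_lie.
exists (P1 ++ [seq (lie_coef g g1 * p.1, p.2) | p <- P2]).
apply: (pbw_expansion_comb expP1 expP2).
- exact: act_word_comm.
- exact: phi_comm.
- by rewrite (perm_catCA [:: g1] [:: g] q).
- by rewrite !wdeg_cons tokdeg_lie addrA.
- by [].
Qed.

End Straightening.

Lemma pbw_expansion_exists w : negword w -> exists P, pbw_expansion w P.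
Proof.
suff IH n : forall w, negword w -> (size w <= n)%N -> exists P, pbw_expansion w P.
  by move=> wneg; apply: IH wneg (leqnn _).
elim: n => [|n IHn] [|g u] wneg //= szw.
1,2: by exists [:: (1, [::])]; apply/pbw_expansion_pbw/pbw_nil.
move: wneg => /andP [gneg uneg]; have [Q expQ] := IHn u uneg szw.
have [termQ _ _] := expQ; apply: (pbw_expansion_cons expQ) => q /termQ [pbwq _ [ltq|peq]].
  by apply: IHn; [apply/andP; split; last apply: pbw_negword | apply: leq_trans ltq szw].
by apply: (pbw_expansion_insert IHn) => //; rewrite (perm_size peq).
Qed.

Lemma sum_phi_pbw_eq0 Q : (forall q, q \in Q -> pbw q.2) -> evalU Q v0 = 0 ->
  \sum_(q <- Q) q.1 * phi q.2 = 0.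
Proof.
move=> pbwQ evQ; have [_ [_ _ _ _ indep]] := verma.
pose ws := undup (map snd Q); pose coef w := \sum_(q <- Q | q.2 == w) q.1.
have coef0 : forall w, w \in ws -> coef w = 0.
  move=> w ws_w; apply: (indep [seq (coef w', w') | w' <- ws]) (map_f _ ws_w).
  - by rewrite -map_comp map_id undup_uniq.
  - by move=> _ /mapP [w' /[!mem_undup] /mapP [q /pbwQ pbwq ->] ->].
  rewrite -evQ /Defs.evalU big_map [RHS](big_undup_partition snd) /ws.
  apply: eq_big => // w' _ /=.
  by rewrite scaler_suml; apply: eq_bigr => q /eqP ->.
rewrite (big_undup_partition snd); apply: big1_seq => w /andP [_ ws_w].
transitivity (coef w * phi w); last by rewrite coef0 ?mul0r.
by rewrite /coef mulr_suml; apply: eq_bigr => q /eqP ->.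
Qed.

(* The linear functional on M(c,h,l) extending phi, read off the PBW coordinates. *)
Definition Phi (v : V) : C :=
  \sum_(p <- sval (boolp.constructive_indefinite_description (pbw_span v))) p.1 * phi p.2.

Lemma Phi_evalU P : (forall p, p \in P -> pbw p.2) ->
  Phi (evalU P v0) = \sum_(p <- P) p.1 * phi p.2.
Proof.
move=> pbwP; rewrite /Phi; case: boolp.constructive_indefinite_description => P' [pbwP' evP'] /=.
apply/eqP; rewrite -subr_eq0 -mulN1r -sum_phi_scale -big_cat /=; apply/eqP.
apply: sum_phi_pbw_eq0; last by rewrite evalU_cat evalU_scale -evP' scaleN1r subrr.
by move=> p; rewrite mem_cat => /orP [/pbwP'|/mapP [q /pbwP pbwq ->]].
Qed.

Lemma Phi_word w : negword w -> Phi (act_word w v0) = phi w.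
Proof.
move=> /pbw_expansion_exists [P [termP <- <-]].
by rewrite Phi_evalU // => p /termP [].
Qed.

Lemma PhiD u v : Phi (u + v) = Phi u + Phi v.
Proof.
have [P [pbwP ->]] := pbw_span u; have [Q [pbwQ ->]] := pbw_span v.
rewrite -evalU_cat !Phi_evalU ?big_cat // => p.
by rewrite mem_cat => /orP [/pbwP|/pbwQ].
Qed.

Lemma PhiZ a v : Phi (a *: v) = a * Phi v.
Proof.
have [P [pbwP ->]] := pbw_span v.
by rewrite -evalU_scale !Phi_evalU ?sum_phi_scale // => _ /mapP [q /pbwP pbwq ->].
Qed.

Lemma Phi0 : Phi 0 = 0.
Proof. by rewrite -(scale0r 0) PhiZ mul0r. Qed.

Lemma Phi_v0 : Phi v0 = 1.
Proof. exact: (Phi_word (w := [::])). Qed.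

(* This is what the recursion defining phi was chosen for. *)
Lemma Phi_actT t (u : T) : negtok t -> Phi (actT t u (kk - 1)) = 0.
Proof.
move=> tneg; rewrite actT_local; set j := kk - 1 - tokdeg t.
have [P [pbwP ->]] := pbw_span (u j).
apply: (@evalU_closed (fun x => Phi (actT t (single j x) (kk - 1)) = 0)).
- by rewrite single0 actT0 Phi0.
- by move=> x y Px Py; rewrite singleD actTD PhiD Px Py addr0.
- by move=> a x Px; rewrite singleZ actTZ PhiZ Px mulr0.
move=> p /pbwP /pbw_negword pneg.
rewrite (actT_single _ _ (homog_word p.2)) subrK single_at PhiD PhiZ.
by rewrite -[act_tok t _]/(act_word (t :: p.2) v0) !Phi_word /= ?tneg // mulNr addNr.
Qed.

Lemma actT_single_comb t j u a v : actT t (single j (u + a *: v)) =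
  (fun j' => actT t (single j u) j' + a *: actT t (single j v) j').
Proof. by rewrite singleD actTD singleZ actTZ. Qed.

Lemma actT_comm_homog g g1 j d x : homog d x ->
  let J := j + tokdeg g1 + tokdeg g in
  actT g (actT g1 (single j x)) J =
  actT g1 (actT g (single j x)) J + lie_coef g g1 *: actT (lie_tok g g1) (single j x) J
  + lie_central g g1 *: single j x J.
Proof.
move=> hx J; have hgx := homog_act_tok g hx; have hg1x := homog_act_tok g1 hx.
rewrite (actT_single g1 j hx) actT_single_comb (actT_single g _ hg1x) (actT_single g _ hx).
rewrite (actT_single g j hx) actT_single_comb (actT_single g1 _ hgx) (actT_single g1 _ hx).
rewrite (actT_single _ j hx) tokdeg_lie addrA (addrAC j (tokdeg g)) !single_at.
have -> : lie_central g g1 *: single j x J = lie_central g g1 *: x.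
  have [deg0|deg_neq0] := eqVneq (tokdeg g + tokdeg g1) 0.
    by rewrite /J -addrA (addrC (tokdeg g1)) deg0 addr0 single_at.
  by rewrite lie_central_eq0 // !scale0r.
rewrite !(addrC (tokdeg _) d) !kappa_shift.
exact/bracket_rearrange/act_tok_comm/kappa_comm.
Qed.

Lemma actT_comm_single g g1 j y :
  let J := j + tokdeg g1 + tokdeg g in
  actT g (actT g1 (single j y)) J =
  actT g1 (actT g (single j y)) J + lie_coef g g1 *: actT (lie_tok g g1) (single j y) J
  + lie_central g g1 *: single j y J.
Proof.
move=> J; have [P [pbwP ->]] := pbw_span y.
apply: (@evalU_closed (fun y => actT g (actT g1 (single j y)) J =
  actT g1 (actT g (single j y)) J + lie_coef g g1 *: actT (lie_tok g g1) (single j y) J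
  + lie_central g g1 *: single j y J)) => [|y1 y2 Sy1 Sy2|a y1 Sy1|p _].
- by rewrite single0 !actT0 !scaler0 !addr0.
- rewrite singleD !actTD /= Sy1 Sy2 !scalerDr !addrA.
  by rewrite [LHS](ACl (1*4*2*5*3*6)).
- by rewrite singleZ !actTZ /= Sy1 !scalerDr !scalerA !(mulrC a).
- exact: actT_comm_homog (homog_word p.2).
Qed.

Lemma actT_congr t (u u' : T) j :
  u (j - tokdeg t) = u' (j - tokdeg t) -> actT t u j = actT t u' j.
Proof. by move=> e; rewrite actT_local e -actT_local. Qed.

Lemma actT_comm g g1 (u : T) j :
  actT g (actT g1 u) j =
  actT g1 (actT g u) j + lie_coef g g1 *: actT (lie_tok g g1) u j + lie_central g g1 *: u j.
Proof.
set j0 := j - tokdeg g - tokdeg g1; set u0 := single j0 (u j0).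
have u0E : u j0 = u0 j0 by rewrite /u0 single_at.
have -> : actT g (actT g1 u) j = actT g (actT g1 u0) j by do 2 apply: actT_congr.
have -> : actT g1 (actT g u) j = actT g1 (actT g u0) j.
  by do 2 apply: actT_congr; rewrite (_ : j - _ - _ = j0) // /j0; lia.
have -> : actT (lie_tok g g1) u j = actT (lie_tok g g1) u0 j.
  by apply: actT_congr; rewrite tokdeg_lie opprD addrA.
have -> : lie_central g g1 *: u j = lie_central g g1 *: u0 j.
  have [deg0|deg_neq0] := eqVneq (tokdeg g + tokdeg g1) 0.
    have jE : j = j0 by rewrite /j0 -addrA -opprD deg0 subr0.
    by rewrite [in u j]jE [in u0 j]jE u0E.
  by rewrite lie_central_eq0 // !scale0r.
have -> : j = j0 + tokdeg g1 + tokdeg g by rewrite /j0; lia.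
exact: actT_comm_single.
Qed.

Local Notation W := (gen_sub (opsD dV hV par h alpha beta gamma) (gensW v0 kk)).
Local Notation Wminus := (gen_sub (opsDminus dV hV par h alpha beta gamma) (gensW v0 kk)).

Lemma opsD_actT t : opsD dV hV par h alpha beta gamma (actT t).
Proof. by case: t => [[] n]; [right | left]; exists n. Qed.

Lemma opsDminus_actT t : negtok t -> opsDminus dV hV par h alpha beta gamma (actT t).
Proof. by case: t => [[] n] tneg; [right | left]; exists n. Qed.

Lemma opsDP f : opsD dV hV par h alpha beta gamma f -> exists t, f = actT t.
Proof. by case=> [[n ->]|[s ->]]; [exists (false, n) | exists (true, s)]. Qed.

Lemma opsDminusP f : opsDminus dV hV par h alpha beta gamma f ->
  exists2 t, negtok t & f = actT t.
Proof. by case=> [[n [nneg ->]]|[s [sneg ->]]]; [exists (false, n) | exists (true, s)]. Qed.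

Lemma Phi_Wminus u : Wminus u -> Phi (u (kk - 1)) = 0.
Proof.
elim=> {u} [u [i [i_ge0 ->]]| |u u' _ Pu _ Pu'|a u _ Pu|f u /opsDminusP [t tneg ->] _ _].
- by rewrite (_ : (kk - 1 == kk + i) = false) ?Phi0 //; apply/negbTE; lia.
- exact: Phi0.
- by rewrite PhiD Pu Pu' addr0.
- by rewrite PhiZ Pu mulr0.
- exact: Phi_actT.
Qed.

(* Since the actT satisfy the relations of D, moving a generator past a
   negative one only produces terms already in Wminus; on the generators
   1 (x) y^(k+i) a nonnegative generator only raises the degree. *)
Lemma Wminus_actT t u : Wminus u -> Wminus (actT t u).
Proof.
move=> Wu; elim: Wu t => {u} [u [i [i_ge0 ->]]| |u u' _ IHu _ IHu'|a u _ IHu|f u opf Wu IHu] t.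
- have [tneg|tnneg] := boolP (negtok t).
    by apply: gs_op; [apply: opsDminus_actT | apply: gs_gen; exists i].
  rewrite -[fun _ => _]/(single (kk + i) v0) (actT_single _ _ homog_v0).
  by apply: (gen_single_high opsDminus_actT); have := nonnegtok_deg tnneg; lia.
- by rewrite actT0; apply: gs_zero.
- by rewrite actTD; apply: gs_add.
- by rewrite actTZ; apply: gs_scale.
have [t1 t1neg ->] := opsDminusP opf.
rewrite (boolp.funext (actT_comm t t1 u)).
apply: gs_add; last exact: gs_scale.
by apply: gs_add; [apply: gs_op; [apply: opsDminus_actT | apply: IHu] | apply/gs_scale/IHu].
Qed.

Lemma W_Wminus u : W u <-> Wminus u.
Proof.
split; elim=> {u} [u gu| |u u' _ Wu _ Wu'|a u _ Wu|f u opf _ Wu].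
1,6: exact: gs_gen.
1,5: exact: gs_zero.
1,4: exact: gs_add.
1,3: exact: gs_scale.
- by have [t ->] := opsDP opf; apply: Wminus_actT.
- by have [t tneg ->] := opsDminusP opf; apply: gs_op (opsD_actT t) _.
Qed.

Lemma W_sumT s : (forall p, p \in s -> kk <= p.1) -> W (sumT s).
Proof. by apply: gen_sumT => t _; apply: opsD_actT. Qed.

Lemma W_add_line v : exists w a, W (single (kk - 1) w) /\ v = w + a *: v0.
Proof.
have [P [pbwP ->]] := pbw_span v.
have negP p : p \in P -> negword p.2 by move/pbwP/pbw_negword.
have [a Wa] := evalU_mod_gen (fun t (_ : negtok t) => opsD_actT t) negP homog_v0.
by exists (evalU P v0 - a *: v0), a; rewrite subrK.
Qed.

Lemma v0_notin_W a : W (single (kk - 1) (a *: v0)) -> a = 0.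
Proof. by move=> /W_Wminus /Phi_Wminus; rewrite single_at PhiZ Phi_v0 mulr1. Qed.

Lemma W_Dminus_stable P d Q : (forall p, p \in P -> wdeg p.2 = d) ->
  (forall q, q \in Q -> negword q.2) ->
  W (single (kk - 1) (evalU P v0)) -> W (single (kk - 1) (evalU Q (evalU P v0))).
Proof.
move=> degP negQ WP.
have [a WQ] := evalU_mod_gen (fun t (_ : negtok t) => opsD_actT t) negQ (homog_evalU degP).
by rewrite -(subrK (a *: evalU P v0) (evalU Q _)); apply: gen_singleD WQ (gen_singleZ _ WP).
Qed.

End Verma.

Theorem lemma3p6 (R : realType) (V : lmodType R[i])
    (dV hV : int -> {linear V -> V}) (par : {linear V -> V}) (v0 : V)
    (c h l alpha beta gamma : R[i]) (kk : int) :
  l != 0 -> gamma != 0 ->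
  is_Verma dV hV v0 c h l ->
  parity_op dV hV par v0 ->
  let W := gen_sub (opsD dV hV par h alpha beta gamma) (gensW v0 kk) in
  [/\ (* (1) *)
      (forall t, W t <-> gen_sub (opsDminus dV hV par h alpha beta gamma)
                                 (gensW v0 kk) t),
      (* (2) *)
      (forall s : seq (int * V), (forall p, p \in s -> kk <= p.1) ->
         W (sumT s)),
      (* (3) *)
      (forall v : V, exists (w : V) (a : R[i]),
         W (single (kk - 1) w) /\ v = w + a *: v0) /\
      (forall a : R[i], W (single (kk - 1) (a *: v0)) -> a = 0) &
      (* (4) *)
      (forall P : seq (R[i] * seq token),
         (forall p, p \in P -> negword p.2) ->
         (exists d : int, forall p, p \in P -> wdeg p.2 = d) ->
         W (single (kk - 1) (evalU dV hV P v0)) ->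
         forall Q : seq (R[i] * seq token),
           (forall q, q \in Q -> negword q.2) ->
           W (single (kk - 1) (evalU dV hV Q (evalU dV hV P v0))))].
Proof.
move=> _ _ verma parity W; rewrite /W; split.
- exact: W_Wminus verma parity.
- exact: W_sumT verma parity.
- by split; [apply: W_add_line verma parity | apply: v0_notin_W verma parity].
- move=> P _ [d degP] WP Q negQ; exact: (W_Dminus_stable verma parity degP negQ WP).
Qed.
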